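(* Let $\alpha>0$, $A>0$ and $a\ge1$. Then for all $\lambda>0$, \[ \#\{k\ge1:\lambda_k(R^A_a,\alpha)\le\lambda\}\le\frac{\lambda A}{\pi^2}+\frac{(\lambda A)^{1/2}}{\pi}\Big(a+\frac1a\Big)+1. \]
   Context: For a bounded open set $\Omega\subset\mathbb{R}^2$ with Lipschitz boundary and $\alpha>0$, $\lambda_1(\Omega,\alpha)\le\lambda_2(\Omega,\alpha)\le\cdots$ denote the eigenvalues, counted with multiplicity, of the Robin Laplacian $-\Delta u=\lambda u$, $\partial_\nu u+\alpha u=0$ on $\partial\Omega$ (defined via the form $\int_\Omega\nabla u\cdot\overline{\nabla v}+\alpha\int_{\partial\Omega}u\overline v$ on $H^1(\Omega)$). $R^A_a$ is a rectangle with side lengths $A^{1/2}a$ and $A^{1/2}/a$. *)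

From Stdlib Require Import Reals Lra List.
From Coquelicot Require Import Coquelicot.
Open Scope R_scope.

Definition dx (u : R -> R -> R) (x y : R) : R := Derive (fun t => u t y) x.
Definition dy (u : R -> R -> R) (x y : R) : R := Derive (fun t => u x t) y.

(* C^1 functions on R^2 (their restrictions to a rectangle form a core of
   the Robin form domain H^1). *)
Definition C1R2 (u : R -> R -> R) : Prop :=
  (forall x y, ex_derive (fun t => u t y) x) /\
  (forall x y, ex_derive (fun t => u x t) y) /\
  (forall p : R * R, continuous (fun q : R * R => u (fst q) (snd q)) p) /\
  (forall p : R * R, continuous (fun q : R * R => dx u (fst q) (snd q)) p) /\
  (forall p : R * R, continuous (fun q : R * R => dy u (fst q) (snd q)) p).

Definition rect_int (L1 L2 : R) (f : R -> R -> R) : R :=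
  RInt (fun x => RInt (fun y => f x y) 0 L2) 0 L1.

Definition bdry_int (L1 L2 : R) (f : R -> R -> R) : R :=
  RInt (fun x => f x 0 + f x L2) 0 L1 + RInt (fun y => f 0 y + f L1 y) 0 L2.

Definition robin_form (alpha L1 L2 : R) (u : R -> R -> R) : R :=
  rect_int L1 L2 (fun x y => (dx u x y)^2 + (dy u x y)^2)
  + alpha * bdry_int L1 L2 (fun x y => (u x y)^2).

Definition l2sq (L1 L2 : R) (u : R -> R -> R) : R :=
  rect_int L1 L2 (fun x y => (u x y)^2).

Definition rayleigh (alpha L1 L2 : R) (u : R -> R -> R) : R :=
  robin_form alpha L1 L2 u / l2sq L1 L2 u.

Fixpoint fsum (k : nat) (g : nat -> R) : R :=
  match k with O => 0 | S k' => fsum k' g + g k' end.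

Definition lincomb (k : nat) (fs : nat -> R -> R -> R) (c : nat -> R) : R -> R -> R :=
  fun x y => fsum k (fun i => c i * fs i x y).

Definition lin_indep (L1 L2 : R) (k : nat) (fs : nat -> R -> R -> R) : Prop :=
  forall c : nat -> R,
    (forall x y, 0 <= x <= L1 -> 0 <= y <= L2 -> lincomb k fs c x y = 0) ->
    forall i, (i < k)%nat -> c i = 0.

Definition span_sup (alpha L1 L2 : R) (k : nat) (fs : nat -> R -> R -> R) : Rbar :=
  Lub_Rbar (fun r => exists c : nat -> R,
                (exists i, (i < k)%nat /\ c i <> 0) /\
                r = rayleigh alpha L1 L2 (lincomb k fs c)).

(* k-th Robin eigenvalue (counted with multiplicity) of [0,L1]x[0,L2] by the
   Courant-Fischer min-max principle over k-dimensional subspaces of the form core. *)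
Definition robin_ev (alpha L1 L2 : R) (k : nat) : Rbar :=
  Glb_Rbar (fun r => exists fs : nat -> R -> R -> R,
                (forall i, (i < k)%nat -> C1R2 (fs i)) /\
                lin_indep L1 L2 k fs /\
                span_sup alpha L1 L2 k fs = Finite r).

Definition side1 (A a : R) : R := sqrt A * a.
Definition side2 (A a : R) : R := sqrt A / a.

(* Fix w > sqrt lam and cut the rectangle into p x q congruent cells with sides shorter than
   PI / w, where p <= sqrt lam L1 / PI + 1 and q <= sqrt lam L2 / PI + 1.  In the span of more
   than p q trial functions some nonzero u has mean zero on every cell.  On a cell, the
   one-dimensional Poincare inequality w^2 int f^2 <= int f'^2 for mean-zero f on an interval of
   length < PI / w, applied in y to u minus its y-mean and in x to that mean, together with
   Cauchy-Schwarz for the x-derivative of the mean, gives w^2 int u^2 <= int |grad u|^2.  The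
   Robin boundary term being nonnegative, the Rayleigh quotient of u is at least w^2 > lam, so by
   min-max lam_k > lam for every k > p q.
   The one-dimensional inequality reduces, through F(x) = int_s^x f, to its Dirichlet version,
   which follows from Picone's identity with the Riccati solution phi = - w tan (w (x - c)). *)

From Stdlib Require Import Reals Lra Lia List Classical.
From Coquelicot Require Import Coquelicot.
Open Scope R_scope.

Lemma continuous_Rplus {T : UniformSpace} (f g : T -> R) x :
  continuous f x -> continuous g x -> continuous (fun y => f y + g y) x.
Proof. apply (continuous_plus (V := R_NormedModule)). Qed.

Lemma continuous_Rminus {T : UniformSpace} (f g : T -> R) x :
  continuous f x -> continuous g x -> continuous (fun y => f y - g y) x.
Proof. apply (continuous_minus (V := R_NormedModule)). Qed.

Lemma continuous_Rmult {T : UniformSpace} (f g : T -> R) x :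
  continuous f x -> continuous g x -> continuous (fun y => f y * g y) x.
Proof. apply (continuous_mult (K := R_AbsRing)). Qed.

Lemma continuous_Rsqr {T : UniformSpace} (f : T -> R) x :
  continuous f x -> continuous (fun y => f y ^ 2) x.
Proof.
intros Hf. apply (continuous_ext (fun y => f y * f y)); [intros; simpl; ring |].
now apply continuous_Rmult.
Qed.

Lemma continuous_Rconst {T : UniformSpace} (c : R) (x : T) : continuous (fun _ => c) x.
Proof. apply continuous_const. Qed.

Lemma ex_RInt_cont (f : R -> R) a b : (forall z, continuous f z) -> ex_RInt f a b.
Proof. intros Hf. apply (ex_RInt_continuous (V := R_CompleteNormedModule)). auto. Qed.

Lemma ex_RInt_cont_on (f : R -> R) a b :
  a <= b -> (forall z, a <= z <= b -> continuous f z) -> ex_RInt f a b.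
Proof.
intros Hab Hf. apply (ex_RInt_continuous (V := R_CompleteNormedModule)). intros z.
rewrite Rmin_left, Rmax_right by exact Hab. apply Hf.
Qed.

Create HintDb cont.
#[local] Hint Resolve continuous_Rplus continuous_Rminus continuous_Rmult continuous_Rsqr
  continuous_Rconst ex_RInt_cont : cont.

Lemma RInt_Rplus (f g : R -> R) a b : ex_RInt f a b -> ex_RInt g a b ->
  RInt (fun x => f x + g x) a b = RInt f a b + RInt g a b.
Proof. apply (RInt_plus (V := R_CompleteNormedModule)). Qed.

Lemma RInt_Rminus (f g : R -> R) a b : ex_RInt f a b -> ex_RInt g a b ->
  RInt (fun x => f x - g x) a b = RInt f a b - RInt g a b.
Proof. apply (RInt_minus (V := R_CompleteNormedModule)). Qed.

Lemma RInt_Rscal (f : R -> R) c a b : ex_RInt f a b ->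
  RInt (fun x => c * f x) a b = c * RInt f a b.
Proof. apply (RInt_scal (V := R_CompleteNormedModule)). Qed.

Lemma RInt_Rext (f g : R -> R) a b : (forall x, f x = g x) -> RInt f a b = RInt g a b.
Proof. intros H. apply RInt_ext. intros x _. apply H. Qed.

Lemma RInt_derive_eq (H h : R -> R) s t : s <= t ->
  (forall x, s <= x <= t -> is_derive H x (h x)) ->
  (forall x, s <= x <= t -> continuous h x) ->
  RInt h s t = H t - H s.
Proof.
intros Hst HH Hh. apply is_RInt_unique.
apply (is_RInt_derive (V := R_CompleteNormedModule)); intros x;
  rewrite Rmin_left, Rmax_right by exact Hst; auto.
Qed.

Lemma is_derive_RInt_cont (f : R -> R) s x :
  (forall z, continuous f z) -> is_derive (RInt f s) x (f x).
Proof.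
intros Hf. apply is_derive_RInt with s; [| apply Hf].
exists (mkposreal 1 Rlt_0_1). intros y _. apply (RInt_correct (V := R_CompleteNormedModule)).
auto with cont.
Qed.

Lemma is_derive_continuous (f : R -> R) x d : is_derive f x d -> continuous f x.
Proof.
intros H. apply (ex_derive_continuous (K := R_AbsRing) (V := R_NormedModule)). now exists d.
Qed.

Lemma is_derive_Rmult (f g : R -> R) x df dg : is_derive f x df -> is_derive g x dg ->
  is_derive (fun y => f y * g y) x (df * g x + f x * dg).
Proof. intros. apply (is_derive_mult f g); auto. intros; apply Rmult_comm. Qed.

Lemma is_derive_sub_const (g : R -> R) c x d :
  is_derive g x d -> is_derive (fun y => g y - c) x d.
Proof.
intros H. replace d with (minus d zero) by (unfold minus, plus, opp, zero; simpl; ring).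
apply (is_derive_minus g (fun _ => c)); [exact H | apply is_derive_const].
Qed.

Lemma tan_riccati w c x : cos (w * (x - c)) <> 0 ->
  is_derive (fun y => - w * sin (w * (y - c)) / cos (w * (y - c))) x
    (- w ^ 2 - (- w * sin (w * (x - c)) / cos (w * (x - c))) ^ 2).
Proof.
intros Hc. unfold Rminus in *. auto_derive; [exact Hc | field; exact Hc].
Qed.

Lemma poincare_dirichlet s t w (F f : R -> R) :
  s < t -> 0 < w -> w * (t - s) < PI ->
  (forall x, is_derive F x (f x)) -> (forall x, continuous f x) ->
  F s = 0 -> F t = 0 ->
  w ^ 2 * RInt (fun x => F x ^ 2) s t <= RInt (fun x => f x ^ 2) s t.
Proof.
intros Hst Hw Hpi DF Cf Fs Ft.
assert (CF : forall x, continuous F x) by (intros x; exact (is_derive_continuous _ _ _ (DF x))).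
set (c := (s + t) / 2).
set (phi := fun x => - w * sin (w * (x - c)) / cos (w * (x - c))).
assert (Hcos : forall x, s <= x <= t -> 0 < cos (w * (x - c))).
{ intros x Hx. apply cos_gt_0; unfold c; nra. }
assert (Dphi : forall x, s <= x <= t -> is_derive phi x (- w ^ 2 - phi x ^ 2)).
{ intros x Hx. apply tan_riccati. specialize (Hcos x Hx). lra. }
assert (Cphi : forall x, s <= x <= t -> continuous phi x)
  by (intros x Hx; exact (is_derive_continuous _ _ _ (Dphi x Hx))).
assert (EX : forall g, (forall z, s <= z <= t -> continuous g z) -> ex_RInt g s t)
  by (intros; apply ex_RInt_cont_on; [lra | auto]).
(* Picone's identity: f^2 - w^2 F^2 = (f - phi F)^2 + (phi F^2)', since phi' = - w^2 - phi^2. *)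
set (G' := fun x => (- w ^ 2 - phi x ^ 2) * F x ^ 2 + phi x * (2 * F x * f x)).
(* [:> R]: an equation at Coquelicot's carrier type would be rejected by [ring]. *)
assert (IG : RInt G' s t = 0 :> R).
{ rewrite (RInt_derive_eq (fun x => phi x * F x ^ 2)); [rewrite Fs, Ft; ring | lra | |].
  - intros x Hx.
    replace (G' x) with ((- w ^ 2 - phi x ^ 2) * F x ^ 2 + phi x * (INR 2 * f x * F x ^ pred 2))
      by (unfold G'; simpl; ring).
    apply is_derive_Rmult; [now apply Dphi | now apply is_derive_pow].
  - intros x Hx. specialize (Cphi x Hx). unfold G'. auto with cont. }
assert (Hsq : 0 <= RInt (fun x => (f x - phi x * F x) ^ 2) s t).
{ apply RInt_ge_0; [lra | | intros; apply pow2_ge_0].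
  apply EX. intros z Hz. specialize (Cphi z Hz). auto with cont. }
assert (E : RInt (fun x => f x ^ 2) s t - w ^ 2 * RInt (fun x => F x ^ 2) s t
            = RInt (fun x => (f x - phi x * F x) ^ 2) s t + RInt G' s t).
{ rewrite <- RInt_Rscal, <- RInt_Rminus, <- RInt_Rplus; auto with cont.
  - apply RInt_Rext. intros x. unfold G'. ring.
  - apply EX. intros z Hz. specialize (Cphi z Hz). auto with cont.
  - apply EX. intros z Hz. specialize (Cphi z Hz). unfold G'. auto with cont. }
lra.
Qed.

Lemma poincare_neumann s t w (f f' : R -> R) :
  s < t -> 0 < w -> w * (t - s) < PI ->
  (forall x, is_derive f x (f' x)) -> (forall x, continuous f' x) ->
  RInt f s t = 0 ->
  w ^ 2 * RInt (fun x => f x ^ 2) s t <= RInt (fun x => f' x ^ 2) s t.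
Proof.
intros Hst Hw Hpi Df Cf' Hmean.
assert (Cf : forall x, continuous f x) by (intros x; exact (is_derive_continuous _ _ _ (Df x))).
set (F := RInt f s).
assert (DF : forall x, is_derive F x (f x)) by (intros; now apply is_derive_RInt_cont).
assert (CF : forall x, continuous F x) by (intros x; exact (is_derive_continuous _ _ _ (DF x))).
assert (Fs : F s = 0) by exact (RInt_point s f).
assert (Ft : F t = 0) by exact Hmean.
assert (Hdir := poincare_dirichlet s t w F f Hst Hw Hpi DF Cf Fs Ft).
assert (Hparts : RInt (fun x => f x ^ 2) s t + RInt (fun x => F x * f' x) s t = 0).
{ rewrite <- RInt_Rplus by auto with cont.
  rewrite (RInt_derive_eq (fun x => F x * f x)); [rewrite Fs, Ft; ring | lra | |].
  - intros x _. replace (f x ^ 2 + F x * f' x) with (f x * f x + F x * f' x) by ring.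
    now apply is_derive_Rmult.
  - intros x _. auto with cont. }
(* AM-GM: [- 2 F f' <= w^2 F^2 + f'^2 / w^2] *)
assert (Hamgm : - 2 * RInt (fun x => F x * f' x) s t
               <= w ^ 2 * RInt (fun x => F x ^ 2) s t + / w ^ 2 * RInt (fun x => f' x ^ 2) s t).
{ rewrite <- !RInt_Rscal, <- RInt_Rplus by auto with cont.
  apply RInt_le; [lra | auto with cont | auto with cont |].
  intros x _.
  replace (w ^ 2 * F x ^ 2 + / w ^ 2 * f' x ^ 2)
    with ((w * F x + f' x / w) ^ 2 - 2 * (F x * f' x)) by (field; lra).
  pose proof (pow2_ge_0 (w * F x + f' x / w)). lra. }
assert (Hw2 : 0 < w ^ 2) by nra.
assert (Hle : RInt (fun x => f x ^ 2) s t <= / w ^ 2 * RInt (fun x => f' x ^ 2) s t) by lra.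
apply (Rmult_le_compat_l (w ^ 2)) in Hle; [| lra].
rewrite <- Rmult_assoc, Rinv_r, Rmult_1_l in Hle by lra. exact Hle.
Qed.

Lemma RInt_sqr_sub_mean (g : R -> R) a b : a < b -> (forall z, continuous g z) ->
  RInt (fun y => (g y - RInt g a b / (b - a)) ^ 2) a b
  = RInt (fun y => g y ^ 2) a b - RInt g a b ^ 2 / (b - a).
Proof.
intros Hab Hg. set (c := RInt g a b / (b - a)).
rewrite (RInt_Rext _ (fun y => (g y ^ 2 + (- 2 * c) * g y) + c ^ 2)) by (intros; ring).
rewrite !RInt_Rplus, RInt_Rscal, RInt_const by auto with cont.
unfold c, scal; simpl; unfold mult; simpl. field. lra.
Qed.

Lemma RInt_sqr_ge_mean (k : R -> R) a b : a < b -> (forall z, continuous k z) ->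
  RInt k a b ^ 2 / (b - a) <= RInt (fun y => k y ^ 2) a b.
Proof.
intros Hab Hk.
assert (H := RInt_ge_0 (fun y => (k y - RInt k a b / (b - a)) ^ 2) a b).
rewrite RInt_sqr_sub_mean in H by auto.
enough (0 <= RInt (fun y => k y ^ 2) a b - RInt k a b ^ 2 / (b - a)) by lra.
apply H; [lra | auto with cont | intros; apply pow2_ge_0].
Qed.

Lemma poincare_variance a b w (g g' : R -> R) :
  a < b -> 0 < w -> w * (b - a) < PI ->
  (forall x, is_derive g x (g' x)) -> (forall x, continuous g' x) ->
  w ^ 2 * (RInt (fun y => g y ^ 2) a b - RInt g a b ^ 2 / (b - a))
  <= RInt (fun y => g' y ^ 2) a b.
Proof.
intros Hab Hw Hpi Dg Cg'.
assert (Cg : forall x, continuous g x) by (intros x; exact (is_derive_continuous _ _ _ (Dg x))).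
rewrite <- RInt_sqr_sub_mean by auto.
apply poincare_neumann; auto.
- intros x. apply is_derive_sub_const, Dg.
- rewrite RInt_Rminus, RInt_const by auto with cont.
  unfold scal; simpl; unfold mult; simpl. field. lra.
Qed.

Lemma RInt_gt_0_of_pt (f : R -> R) a b x0 : a < b -> (forall z, continuous f z) ->
  (forall x, a <= x <= b -> 0 <= f x) -> a <= x0 <= b -> 0 < f x0 -> 0 < RInt f a b.
Proof.
intros Hab Hf Hnn Hx0 Hpos.
destruct (proj1 (filterlim_locally f (f x0)) (Hf x0)
            (mkposreal _ (Rdiv_lt_0_compat _ 2 Hpos Rlt_0_2))) as [d Hd].
pose proof (cond_pos d) as Hdpos.
set (s := Rmax a (x0 - d / 2)). set (t := Rmin b (x0 + d / 2)).
assert (Hs : a <= s /\ x0 - d / 2 <= s /\ s <= x0)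
  by (unfold s; repeat split; [apply Rmax_l | apply Rmax_r | apply Rmax_lub; lra]).
assert (Ht : t <= b /\ t <= x0 + d / 2 /\ x0 <= t)
  by (unfold t; repeat split; [apply Rmin_l | apply Rmin_r | apply Rmin_glb; lra]).
assert (Hst : s < t) by (unfold s, t; apply Rmax_lub_lt; apply Rmin_glb_lt; lra).
rewrite <- (RInt_Chasles (V := R_CompleteNormedModule) f a s b),
        <- (RInt_Chasles (V := R_CompleteNormedModule) f s t b) by auto with cont.
assert (0 <= RInt f a s) by (apply RInt_ge_0; [lra | auto with cont | intros; apply Hnn; lra]).
assert (0 <= RInt f t b) by (apply RInt_ge_0; [lra | auto with cont | intros; apply Hnn; lra]).
assert (0 < RInt f s t).
{ apply RInt_gt_0; [exact Hst | | auto].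
  intros x Hx. assert (Hball : ball x0 d x) by (change (Rabs (x - x0) < d); apply Rabs_def1; lra).
  specialize (Hd x Hball). change (Rabs (f x - f x0) < f x0 / 2) in Hd.
  apply Rabs_def2 in Hd. lra. }
change (0 < RInt f a s + (RInt f s t + RInt f t b)). lra.
Qed.

Lemma fsum_ext n (a b : nat -> R) :
  (forall j, (j < n)%nat -> a j = b j) -> fsum n a = fsum n b.
Proof. induction n; simpl; intros H; [reflexivity |]. rewrite IHn, H by auto. reflexivity. Qed.

Lemma fsum_zero n (a : nat -> R) : (forall j, (j < n)%nat -> a j = 0) -> fsum n a = 0.
Proof. induction n; simpl; intros H; [reflexivity |]. rewrite IHn, H by auto. ring. Qed.

Lemma fsum_le n (a b : nat -> R) :
  (forall j, (j < n)%nat -> a j <= b j) -> fsum n a <= fsum n b.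
Proof.
induction n; simpl; intros H; [lra |].
apply Rplus_le_compat; [apply IHn; auto | apply H; lia].
Qed.

Lemma fsum_scal n c (a : nat -> R) : c * fsum n a = fsum n (fun j => c * a j).
Proof. induction n; simpl; [ring |]. rewrite <- IHn. ring. Qed.

Lemma fsum_minus n (a b : nat -> R) : fsum n (fun j => a j - b j) = fsum n a - fsum n b.
Proof. induction n; simpl; [ring |]. rewrite IHn. ring. Qed.

Lemma homogeneous_system_nontrivial n : forall k (a : nat -> nat -> R), (n < k)%nat ->
  exists c : nat -> R, (exists i, (i < k)%nat /\ c i <> 0) /\
    forall j, (j < n)%nat -> fsum k (fun i => c i * a j i) = 0.
Proof.
induction n as [| n IHn]; intros k a Hk.
- exists (fun _ => 1). split; [exists 0%nat; split; [lia | lra] | intros; lia].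
- destruct k as [| k]; [lia |].
  destruct (classic (exists j0, (j0 <= n)%nat /\ a j0 k <> 0)) as [[j0 [Hj0 Hpiv]] | Hnopiv].
  + (* Eliminate the unknown [k] with the pivot equation [j0]; equation [n] takes its slot. *)
    set (row := fun j => if Nat.eqb j j0 then n else j).
    set (b := fun j i => a (row j) i - a (row j) k / a j0 k * a j0 i).
    destruct (IHn k b) as [d [[i1 [Hi1 Hd]] Hsol]]; [lia |].
    exists (fun i => if Nat.ltb i k then d i else - fsum k (fun i => d i * a j0 i) / a j0 k).
    split.
    * exists i1. split; [lia |]. destruct (Nat.ltb_spec i1 k); [exact Hd | lia].
    * intros j Hj. change (fsum (S k) ?F) with (fsum k F + F k). cbv beta. rewrite Nat.ltb_irrefl.
      rewrite (fsum_ext k _ (fun i => d i * a j i))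
        by (intros i Hi; destruct (Nat.ltb_spec i k); [reflexivity | lia]).
      destruct (Nat.eq_dec j j0) as [-> | Hjj0]; [field; exact Hpiv |].
      set (j' := if Nat.eqb j n then j0 else j).
      assert (Hj' : (j' < n)%nat) by (unfold j'; destruct (Nat.eqb_spec j n); lia).
      assert (Hrow : row j' = j).
      { unfold row, j'. destruct (Nat.eqb_spec j n) as [-> | Hjn].
        - now rewrite Nat.eqb_refl.
        - destruct (Nat.eqb_spec j j0); [lia | reflexivity]. }
      specialize (Hsol j' Hj'). unfold b in Hsol. rewrite Hrow in Hsol.
      rewrite (fsum_ext k _ (fun i => d i * a j i - a j k / a j0 k * (d i * a j0 i))) in Hsol
        by (intros; ring).
      rewrite fsum_minus, <- fsum_scal in Hsol.
      rewrite <- Hsol. field. exact Hpiv.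
  + exists (fun i => if Nat.eqb i k then 1 else 0). split.
    * exists k. split; [lia |]. rewrite Nat.eqb_refl. lra.
    * intros j Hj. change (fsum (S k) ?F) with (fsum k F + F k). cbv beta.
      assert (Hajk : a j k = 0)
        by (apply NNPP; intros H; apply Hnopiv; exists j; split; [lia | exact H]).
      rewrite Nat.eqb_refl, Hajk, fsum_zero; [ring |].
      intros i Hi. destruct (Nat.eqb_spec i k); [lia | ring].
Qed.

Lemma ex_RInt_fsum n (g : nat -> R -> R) a b :
  (forall j, (j < n)%nat -> ex_RInt (g j) a b) ->
  ex_RInt (fun x => fsum n (fun j => g j x)) a b.
Proof.
induction n; simpl; intros H; [apply ex_RInt_const |].
apply (ex_RInt_plus (V := R_NormedModule) (fun x => fsum n (fun j => g j x)) (g n)); auto.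
Qed.

Lemma RInt_fsum n (g : nat -> R -> R) a b :
  (forall j, (j < n)%nat -> ex_RInt (g j) a b) ->
  RInt (fun x => fsum n (fun j => g j x)) a b = fsum n (fun j => RInt (g j) a b).
Proof.
induction n; simpl; intros H.
- rewrite RInt_const. unfold scal; simpl; unfold mult; simpl. ring.
- rewrite (RInt_Rplus (fun x => fsum n (fun j => g j x)) (g n)), IHn; auto using ex_RInt_fsum.
Qed.

Lemma RInt_cells (g : R -> R) h n : (forall z, continuous g z) ->
  RInt g 0 (INR n * h) = fsum n (fun j => RInt g (INR j * h) (INR (S j) * h)).
Proof.
intros Hg. induction n.
- rewrite Rmult_0_l. exact (RInt_point 0 g).
- change (fsum (S n) ?F) with (fsum n F + F n). rewrite <- IHn.
  rewrite <- (RInt_Chasles (V := R_CompleteNormedModule) g 0 (INR n * h)); auto with cont.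
Qed.

Definition continuous2 (G : R -> R -> R) : Prop :=
  forall p : R * R, continuous (fun q : R * R => G (fst q) (snd q)) p.

Lemma continuous2_continuous (G : R -> R -> R) p :
  continuous2 G -> continuous (fun q : R * R => G (fst q) (snd q)) p.
Proof. auto. Qed.

Lemma continuous2_section_l (G : R -> R -> R) x y :
  continuous2 G -> continuous (fun t => G t y) x.
Proof.
intros HG. apply (continuous_comp_2 (fun t : R => t) (fun _ : R => y) G x);
  [apply continuous_id | apply continuous_const | apply HG].
Qed.

Lemma continuous2_section_r (G : R -> R -> R) x y :
  continuous2 G -> continuous (fun t => G x t) y.
Proof.
intros HG. apply (continuous_comp_2 (fun _ : R => x) (fun t : R => t) G y);
  [apply continuous_const | apply continuous_id | apply HG].
Qed.

Lemma C1R2_continuous2 (u : R -> R -> R) :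
  C1R2 u -> continuous2 u /\ continuous2 (dx u) /\ continuous2 (dy u).
Proof. intros (_ & _ & Cu & Cdx & Cdy). now repeat split. Qed.

#[local] Hint Unfold continuous2 : cont.
#[local] Hint Resolve continuous2_continuous continuous2_section_l continuous2_section_r : cont.

Lemma continuous2_2d_pt (G : R -> R -> R) x y : continuous2 G -> continuity_2d_pt G x y.
Proof. intros HG. apply continuity_2d_pt_filterlim, HG. Qed.

Lemma continuous_RInt_param (G : R -> R -> R) a b x0 : continuous2 G -> a <= b ->
  continuous (fun x => RInt (fun y => G x y) a b) x0.
Proof.
intros HG Hab. apply filterlim_locally. intros eps.
set (e := eps / (b - a + 1)).
assert (He : 0 < e) by (apply Rdiv_lt_0_compat; [apply cond_pos | lra]).
destruct (uniform_continuity_2d G (x0 - 1) (x0 + 1) a b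
            (fun x y _ _ => continuous2_2d_pt G x y HG) (mkposreal e He)) as [d Hd].
exists (mkposreal _ (Rmin_pos d 1 (cond_pos d) Rlt_0_1)). intros x Hx.
change (Rabs (x - x0) < Rmin d 1) in Hx.
change (Rabs (RInt (fun y => G x y) a b - RInt (fun y => G x0 y) a b) < eps).
assert (Hxd : Rabs (x - x0) < d) by (eapply Rlt_le_trans; [exact Hx | apply Rmin_l]).
assert (Hx1 : Rabs (x - x0) < 1) by (eapply Rlt_le_trans; [exact Hx | apply Rmin_r]).
apply Rabs_def2 in Hx1.
rewrite <- RInt_Rminus by auto with cont.
apply Rle_lt_trans with ((b - a) * e).
- apply abs_RInt_le_const; [lra | auto with cont |].
  intros t Ht. left. apply Hd; try lra.
  rewrite Rminus_diag, Rabs_R0. apply cond_pos.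
- unfold e. pose proof (cond_pos eps).
  apply Rmult_lt_reg_r with (b - a + 1); [lra |].
  field_simplify; lra.
Qed.

#[local] Hint Resolve continuous_RInt_param : cont.

Lemma is_derive_RInt_param_C1 (u : R -> R -> R) a b x : C1R2 u ->
  is_derive (fun x => RInt (fun y => u x y) a b) x (RInt (fun y => dx u x y) a b).
Proof.
intros (Dx & _ & Cu & Cdx & _).
apply (is_derive_RInt_param u a b x).
- exists (mkposreal 1 Rlt_0_1). intros; apply Dx.
- intros t _. apply continuous2_2d_pt. exact Cdx.
- exists (mkposreal 1 Rlt_0_1). intros y _. apply ex_RInt_cont. intros z.
  apply continuous2_section_r. exact Cu.
Qed.

Lemma C1R2_const c : C1R2 (fun _ _ => c).
Proof.
repeat split; intros; [apply ex_derive_const | apply ex_derive_const | ..];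
  apply continuous_const.
Qed.

Lemma C1R2_plus_scal (f g : R -> R -> R) r :
  C1R2 f -> C1R2 g -> C1R2 (fun x y => f x y + r * g x y).
Proof.
intros (Dxf & Dyf & Cf & Cdxf & Cdyf) (Dxg & Dyg & Cg & Cdxg & Cdyg).
assert (Dx : forall x y, ex_derive (fun t => f t y + r * g t y) x)
  by (intros; apply (ex_derive_plus (fun t => f t y) (fun t => r * g t y));
      [apply Dxf | apply (ex_derive_scal (fun t => g t y)), Dxg]).
assert (Dy : forall x y, ex_derive (fun t => f x t + r * g x t) y)
  by (intros; apply (ex_derive_plus (fun t => f x t) (fun t => r * g x t));
      [apply Dyf | apply (ex_derive_scal (fun t => g x t)), Dyg]).
repeat split; auto.
- intros p. auto with cont.
- intros p. apply (continuous_ext (fun q => dx f (fst q) (snd q) + r * dx g (fst q) (snd q))).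
  + intros q. unfold dx. rewrite Derive_plus, Derive_scal; auto.
    apply (ex_derive_scal (fun t => g t (snd q))), Dxg.
  + auto with cont.
- intros p. apply (continuous_ext (fun q => dy f (fst q) (snd q) + r * dy g (fst q) (snd q))).
  + intros q. unfold dy. rewrite Derive_plus, Derive_scal; auto.
    apply (ex_derive_scal (fun t => g (fst q) t)), Dyg.
  + auto with cont.
Qed.

Lemma C1R2_lincomb k (fs : nat -> R -> R -> R) c :
  (forall i, (i < k)%nat -> C1R2 (fs i)) -> C1R2 (lincomb k fs c).
Proof.
induction k as [| k IHk]; intros Hfs; [apply C1R2_const |].
apply (C1R2_plus_scal (lincomb k fs c) (fs k) (c k)); [apply IHk; auto | apply Hfs; lia].
Qed.

Definition box_int (x0 x1 y0 y1 : R) (G : R -> R -> R) : R :=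
  RInt (fun x => RInt (fun y => G x y) y0 y1) x0 x1.

Lemma box_int_lincomb x0 x1 y0 y1 k (fs : nat -> R -> R -> R) (c : nat -> R) :
  y0 <= y1 -> (forall l, (l < k)%nat -> continuous2 (fs l)) ->
  box_int x0 x1 y0 y1 (lincomb k fs c) = fsum k (fun l => c l * box_int x0 x1 y0 y1 (fs l)).
Proof.
intros Hy Hfs. unfold box_int, lincomb.
rewrite (RInt_Rext _ (fun x => fsum k (fun l => c l * RInt (fun y => fs l x y) y0 y1))).
- rewrite RInt_fsum.
  + apply fsum_ext. intros l Hl. apply RInt_Rscal. specialize (Hfs l Hl). auto with cont.
  + intros l Hl. specialize (Hfs l Hl). auto with cont.
- intros x. rewrite (RInt_fsum k (fun l y => c l * fs l x y)).
  + apply fsum_ext. intros l Hl. apply RInt_Rscal. specialize (Hfs l Hl). auto with cont.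
  + intros l Hl. specialize (Hfs l Hl). auto with cont.
Qed.

Definition cell_int (h1 h2 : R) (G : R -> R -> R) (i j : nat) : R :=
  box_int (INR i * h1) (INR (S i) * h1) (INR j * h2) (INR (S j) * h2) G.

Lemma rect_int_cells (G : R -> R -> R) p q h1 h2 : continuous2 G -> 0 <= h2 ->
  rect_int (INR p * h1) (INR q * h2) G
  = fsum p (fun i => fsum q (fun j => cell_int h1 h2 G i j)).
Proof.
intros HG Hh2. unfold rect_int.
assert (Hq : 0 <= INR q * h2) by (apply Rmult_le_pos; [apply pos_INR | exact Hh2]).
rewrite RInt_cells by auto with cont.
apply fsum_ext. intros i _. unfold cell_int, box_int.
rewrite <- (RInt_fsum q (fun j x => RInt (fun y => G x y) (INR j * h2) (INR (S j) * h2))).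
- apply RInt_Rext. intros x. apply RInt_cells. auto with cont.
- intros j _. assert (INR j * h2 <= INR (S j) * h2) by (rewrite S_INR; nra).
  auto with cont.
Qed.

Lemma poincare_box (u : R -> R -> R) x0 x1 y0 y1 w : C1R2 u ->
  x0 < x1 -> y0 < y1 -> 0 < w -> w * (x1 - x0) < PI -> w * (y1 - y0) < PI ->
  box_int x0 x1 y0 y1 u = 0 ->
  w ^ 2 * box_int x0 x1 y0 y1 (fun x y => u x y ^ 2)
  <= box_int x0 x1 y0 y1 (fun x y => dx u x y ^ 2 + dy u x y ^ 2).
Proof.
intros Hu Hx Hy Hw Hpx Hpy Hmean.
pose proof Hu as (_ & Dy & _).
destruct (C1R2_continuous2 u Hu) as (Cu & Cdx & Cdy).
assert (Hy' : y0 <= y1) by lra.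
set (h := y1 - y0).
set (m := fun x => RInt (fun y => u x y) y0 y1).
set (m' := fun x => RInt (fun y => dx u x y) y0 y1).
assert (Cm : forall x, continuous m x) by (intros; unfold m; auto with cont).
assert (Cm' : forall x, continuous m' x) by (intros; unfold m'; auto with cont).
assert (Hsec : forall x, / h * m' x ^ 2 + w ^ 2 * RInt (fun y => u x y ^ 2) y0 y1
                           - / h * (w ^ 2 * m x ^ 2)
                         <= RInt (fun y => dx u x y ^ 2 + dy u x y ^ 2) y0 y1).
{ intros x. rewrite RInt_Rplus by auto with cont.
  assert (Hcs := RInt_sqr_ge_mean (fun y => dx u x y) y0 y1 Hy).
  assert (Hpv := poincare_variance y0 y1 w (fun y => u x y) (fun y => dy u x y) Hy Hw Hpy).
  fold h in Hcs, Hpv. fold (m x) in Hpv. fold (m' x) in Hcs.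
  enough (w ^ 2 * (RInt (fun y => u x y ^ 2) y0 y1 - m x ^ 2 / h)
          <= RInt (fun y => dy u x y ^ 2) y0 y1
          /\ m' x ^ 2 / h <= RInt (fun y => dx u x y ^ 2) y0 y1) by (unfold Rdiv in *; lra).
  split; [apply Hpv | apply Hcs]; auto with cont.
  intros y. apply Derive_correct, Dy. }
assert (Hm : w ^ 2 * RInt (fun x => m x ^ 2) x0 x1 <= RInt (fun x => m' x ^ 2) x0 x1).
{ apply poincare_neumann; auto. intros x. apply is_derive_RInt_param_C1, Hu. }
assert (Hh : 0 < / h) by (apply Rinv_0_lt_compat; unfold h; lra).
unfold box_int. eapply Rle_trans; [| apply RInt_le; [lra | | | intros x _; apply Hsec]];
  [| auto 10 with cont ..].
rewrite RInt_Rminus, RInt_Rplus, !RInt_Rscal by auto 10 with cont.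
nra.
Qed.

Lemma poincare_rect_cells (u : R -> R -> R) p q h1 h2 w : C1R2 u ->
  0 < h1 -> 0 < h2 -> 0 < w -> w * h1 < PI -> w * h2 < PI ->
  (forall i j, (i < p)%nat -> (j < q)%nat -> cell_int h1 h2 u i j = 0) ->
  w ^ 2 * l2sq (INR p * h1) (INR q * h2) u
  <= rect_int (INR p * h1) (INR q * h2) (fun x y => dx u x y ^ 2 + dy u x y ^ 2).
Proof.
intros Hu H1 H2 Hw Hp1 Hp2 Hcells.
destruct (C1R2_continuous2 u Hu) as (Cu & Cdx & Cdy).
assert (Hwidth : forall n h, INR (S n) * h - INR n * h = h) by (intros; rewrite S_INR; ring).
unfold l2sq. rewrite !rect_int_cells by (auto with cont || lra).
rewrite fsum_scal. apply fsum_le. intros i Hi.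
rewrite fsum_scal. apply fsum_le. intros j Hj.
apply poincare_box; [exact Hu | rewrite S_INR; nra | rewrite S_INR; nra | exact Hw
                   | rewrite Hwidth; exact Hp1 | rewrite Hwidth; exact Hp2 | now apply Hcells].
Qed.

Lemma l2sq_pos (u : R -> R -> R) L1 L2 x0 y0 : continuous2 u -> 0 < L1 -> 0 < L2 ->
  0 <= x0 <= L1 -> 0 <= y0 <= L2 -> u x0 y0 <> 0 -> 0 < l2sq L1 L2 u.
Proof.
intros Cu H1 H2 Hx Hy Hn. unfold l2sq, rect_int.
assert (Hnn : forall x, 0 <= RInt (fun y => u x y ^ 2) 0 L2)
  by (intros; apply RInt_ge_0; [lra | auto with cont | intros; apply pow2_ge_0]).
assert (H2' : 0 <= L2) by lra.
apply RInt_gt_0_of_pt with x0; auto with cont.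
apply RInt_gt_0_of_pt with y0; auto with cont; [intros; apply pow2_ge_0 |].
apply pow2_gt_0, Hn.
Qed.

Lemma bdry_int_sqr_ge_0 (u : R -> R -> R) L1 L2 : continuous2 u -> 0 <= L1 -> 0 <= L2 ->
  0 <= bdry_int L1 L2 (fun x y => u x y ^ 2).
Proof.
intros Cu H1 H2. unfold bdry_int.
apply Rplus_le_le_0_compat; apply RInt_ge_0; auto with cont;
  intros; apply Rplus_le_le_0_compat; apply pow2_ge_0.
Qed.

Lemma rayleigh_ge alpha L1 L2 w (u : R -> R -> R) :
  0 <= alpha -> 0 <= L1 -> 0 <= L2 -> continuous2 u -> 0 < l2sq L1 L2 u ->
  w ^ 2 * l2sq L1 L2 u <= rect_int L1 L2 (fun x y => dx u x y ^ 2 + dy u x y ^ 2) ->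
  w ^ 2 <= rayleigh alpha L1 L2 u.
Proof.
intros Ha H1 H2 Cu Hpos Hgrad. unfold rayleigh, robin_form.
apply (Rle_div_r _ _ _ Hpos).
assert (Hb := bdry_int_sqr_ge_0 u L1 L2 Cu H1 H2).
assert (0 <= alpha * bdry_int L1 L2 (fun x y => u x y ^ 2)) by (apply Rmult_le_pos; assumption).
lra.
Qed.

Lemma exists_zero_cell_means p q k h1 h2 (fs : nat -> R -> R -> R) :
  (p * q < k)%nat -> 0 <= h2 -> (forall l, (l < k)%nat -> continuous2 (fs l)) ->
  exists c : nat -> R, (exists l, (l < k)%nat /\ c l <> 0) /\
    forall i j, (i < p)%nat -> (j < q)%nat -> cell_int h1 h2 (lincomb k fs c) i j = 0.
Proof.
intros Hk Hh2 Hfs.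
destruct (homogeneous_system_nontrivial (p * q) k
            (fun t l => cell_int h1 h2 (fs l) (t / q) (t mod q)) Hk) as [c [Hc Hsol]].
exists c. split; [exact Hc |]. intros i j Hi Hj.
specialize (Hsol (q * i + j)%nat ltac:(nia)).
rewrite <- (Nat.div_unique (q * i + j) q i j Hj eq_refl),
        <- (Nat.mod_unique (q * i + j) q i j Hj eq_refl) in Hsol.
unfold cell_int. rewrite box_int_lincomb; [exact Hsol | rewrite S_INR; nra | exact Hfs].
Qed.

Lemma robin_ev_ge alpha L1 L2 p q w k :
  0 <= alpha -> 0 < L1 -> 0 < L2 -> (0 < p)%nat -> (0 < q)%nat -> 0 < w ->
  w * (L1 / INR p) < PI -> w * (L2 / INR q) < PI -> (p * q < k)%nat ->
  Rbar_le (w ^ 2) (robin_ev alpha L1 L2 k).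
Proof.
intros Ha H1 H2 Hp Hq Hw Hp1 Hp2 Hk.
apply lt_0_INR in Hp, Hq.
set (h1 := L1 / INR p) in *. set (h2 := L2 / INR q) in *.
assert (Hh1 : 0 < h1) by (apply Rdiv_lt_0_compat; lra).
assert (Hh2 : 0 < h2) by (apply Rdiv_lt_0_compat; lra).
apply Glb_Rbar_correct. intros r (fs & Hfs & Hli & Hsup).
destruct (exists_zero_cell_means p q k h1 h2 fs) as [c [Hc Hcells]]; [exact Hk | lra | |].
{ intros l Hl. exact (proj1 (C1R2_continuous2 _ (Hfs l Hl))). }
set (u := lincomb k fs c) in *.
assert (Hu : C1R2 u) by (apply C1R2_lincomb, Hfs).
destruct (C1R2_continuous2 u Hu) as [Cu _].
assert (Hnz : exists x0 y0, 0 <= x0 <= L1 /\ 0 <= y0 <= L2 /\ u x0 y0 <> 0).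
{ apply NNPP. intros Hno. destruct Hc as [l [Hl Hcl]]. apply Hcl, (Hli c); [| exact Hl].
  intros x y Hx Hy. apply NNPP. intros Hne. apply Hno. now exists x, y. }
destruct Hnz as (x0 & y0 & Hx0 & Hy0 & Hu0).
assert (Hray : w ^ 2 <= rayleigh alpha L1 L2 u).
{ apply rayleigh_ge; try lra; [exact Cu | now apply l2sq_pos with x0 y0 |].
  replace L1 with (INR p * h1) by (unfold h1; field; lra).
  replace L2 with (INR q * h2) by (unfold h2; field; lra).
  apply poincare_rect_cells; assumption. }
assert (Hle : Rbar_le (rayleigh alpha L1 L2 u) (span_sup alpha L1 L2 k fs)).
{ apply Lub_Rbar_correct. exists c. split; [exact Hc | reflexivity]. }
rewrite Hsup in Hle. simpl in *. lra.
Qed.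

Lemma NoDup_length_le_bound (ks : list nat) N :
  NoDup ks -> (forall k, In k ks -> (1 <= k <= N)%nat) -> (length ks <= N)%nat.
Proof.
intros Hnd Hks. rewrite <- (length_seq N 1).
apply NoDup_incl_length; [exact Hnd |].
intros k Hk. apply in_seq. specialize (Hks k Hk). lia.
Qed.

Lemma robin_count_le_cells alpha L1 L2 p q w lam (ks : list nat) :
  0 <= alpha -> 0 < L1 -> 0 < L2 -> (0 < p)%nat -> (0 < q)%nat -> 0 < w ->
  w * (L1 / INR p) < PI -> w * (L2 / INR q) < PI -> lam < w ^ 2 -> NoDup ks ->
  (forall k, In k ks -> (1 <= k)%nat /\ Rbar_le (robin_ev alpha L1 L2 k) lam) ->
  (length ks <= p * q)%nat.
Proof.
intros Ha H1 H2 Hp Hq Hw Hp1 Hp2 Hlam Hnd Hks.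
apply NoDup_length_le_bound; [exact Hnd |]. intros k Hk.
destruct (Hks k Hk) as [Hk1 Hev]. split; [exact Hk1 |].
apply Nat.nlt_ge. intros Hlt.
assert (Hge := robin_ev_ge alpha L1 L2 p q w k Ha H1 H2 Hp Hq Hw Hp1 Hp2 Hlt).
assert (H := Rbar_le_trans _ _ _ Hge Hev). simpl in H. lra.
Qed.

Lemma exists_nat_between x : 0 <= x -> exists n : nat, x < INR n <= x + 1.
Proof. intros Hx. destruct (nfloor_ex x Hx) as [n Hn]. exists (S n). rewrite S_INR. lra. Qed.

Lemma exists_cell_count s L : 0 < s -> 0 < L ->
  exists n : nat, (0 < n)%nat /\ s * (L / INR n) < PI /\ INR n <= s / PI * L + 1.
Proof.
intros Hs HL. pose proof PI_RGT_0.
assert (Hn : 0 < s / PI * L) by (apply Rmult_lt_0_compat; [apply Rdiv_lt_0_compat |]; lra).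
destruct (exists_nat_between (s / PI * L)) as [n [Hn1 Hn2]]; [lra |].
exists n. split; [apply INR_lt; simpl; lra | split; [| exact Hn2]].
apply (Rmult_lt_reg_r (INR n / PI)); [apply Rdiv_lt_0_compat; lra |].
replace (s * (L / INR n) * (INR n / PI)) with (s / PI * L) by (field; lra).
replace (PI * (INR n / PI)) with (INR n) by (field; lra). exact Hn1.
Qed.

Lemma exists_gt_mul_lt s c t1 t2 : 0 <= s -> 0 < t1 -> 0 < t2 -> s * t1 < c -> s * t2 < c ->
  exists w, s < w /\ w * t1 < c /\ w * t2 < c.
Proof.
intros Hs H1 H2 Hs1 Hs2. set (t := Rmax t1 t2).
assert (Ht : 0 < t) by (eapply Rlt_le_trans; [exact H1 | apply Rmax_l]).
assert (Hst : s * t < c) by (unfold t; apply Rmax_case; assumption).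
exists ((s + c / t) / 2).
assert (Hwt : (s + c / t) / 2 * t < c).
{ replace ((s + c / t) / 2 * t) with ((s * t + c) / 2) by (field; lra). lra. }
assert (Hw : s < (s + c / t) / 2).
{ enough (s < c / t) by lra. apply (Rmult_lt_reg_r t); [exact Ht |].
  replace (c / t * t) with c by (field; lra). exact Hst. }
split; [exact Hw | split]; (eapply Rle_lt_trans; [| exact Hwt]);
  (apply Rmult_le_compat_l; [lra |]); [apply Rmax_l | apply Rmax_r].
Qed.

Lemma robin_count_rect alpha L1 L2 lam (ks : list nat) :
  0 <= alpha -> 0 < L1 -> 0 < L2 -> 0 < lam -> NoDup ks ->
  (forall k, In k ks -> (1 <= k)%nat /\ Rbar_le (robin_ev alpha L1 L2 k) lam) ->
  INR (length ks) <= (sqrt lam / PI * L1 + 1) * (sqrt lam / PI * L2 + 1).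
Proof.
intros Ha H1 H2 Hlam Hnd Hks.
assert (Hs : 0 < sqrt lam) by (apply sqrt_lt_R0; lra).
destruct (exists_cell_count (sqrt lam) L1 Hs H1) as (p & Hp & Hp1 & Hp2).
destruct (exists_cell_count (sqrt lam) L2 Hs H2) as (q & Hq & Hq1 & Hq2).
apply lt_0_INR in Hp as Hp'. apply lt_0_INR in Hq as Hq'.
assert (Hwex : exists w, sqrt lam < w /\ w * (L1 / INR p) < PI /\ w * (L2 / INR q) < PI)
  by (apply exists_gt_mul_lt; try apply Rdiv_lt_0_compat; lra).
destruct Hwex as (w & Hw & Hw1 & Hw2).
apply Rle_trans with (INR p * INR q); [| apply Rmult_le_compat; lra].
rewrite <- mult_INR. apply le_INR.
apply (robin_count_le_cells alpha L1 L2 p q w lam ks); auto; [lra |].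
rewrite <- (sqrt_sqrt lam) by lra. nra.
Qed.

Theorem lemma6p3 (alpha A a : R) :
  0 < alpha -> 0 < A -> 1 <= a ->
  forall lam : R, 0 < lam ->
  forall ks : list nat,
    NoDup ks ->
    (forall k, In k ks ->
       (1 <= k)%nat /\ Rbar_le (robin_ev alpha (side1 A a) (side2 A a) k) (Finite lam)) ->
    INR (length ks) <= lam * A / PI ^ 2 + sqrt (lam * A) / PI * (a + 1 / a) + 1.
Proof.
intros Ha HA Ha1 lam Hlam ks Hnd Hks.
assert (HsA : 0 < sqrt A) by (apply sqrt_lt_R0; lra).
eapply Rle_trans.
{ apply (robin_count_rect alpha); [lra | | | exact Hlam | exact Hnd | exact Hks].
  - unfold side1. apply Rmult_lt_0_compat; lra.
  - unfold side2. apply Rdiv_lt_0_compat; lra. }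
right. unfold side1, side2. rewrite sqrt_mult by lra.
replace (lam * A) with (sqrt lam * sqrt lam * (sqrt A * sqrt A)) by (rewrite !sqrt_sqrt; lra).
pose proof PI_RGT_0. field. lra.
Qed.
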